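(* Let $\alpha\neq0$ be real, let $\vec a$ be a timelike vector of $\mathbb L^3$, and let $S$ be a spacelike surface of $\mathbb L^3$ that is invariant under the one-parameter group of rotations of $\mathbb L^3$ about a spacelike axis $L$. Suppose that $S$ satisfies $$H(p)=\alpha\frac{\langle N(p),\vec a\rangle}{\langle p,\vec a\rangle}\qquad (p\in S).$$ Then either $\vec a$ is orthogonal to $L$, or (up to a rigid motion taking $L$ to the $x$-axis) $S$ is the hyperbolic plane $\mathbb H^2(r)$ for some $r>0$, in which case $\vec a$ may be an arbitrary timelike vector.
   Context: $\mathbb L^3$ is $\mathbb R^3$ with the metric $\langle\cdot,\cdot\rangle=dx^2+dy^2-dz^2$. A spacelike surface has Riemannian induced metric and timelike unit normal $N$; $H$ denotes its mean curvature, the trace of the second fundamental form with respect to $N$. Rotations about a spacelike axis: when the axis is the $x$-axis, these are the linear isometries $\begin{pmatrix}1&0&0\\0&\cosh\theta&\sinh\theta\\0&\sinh\theta&\cosh\theta\end{pmatrix}$, $\theta\in\mathbb R$, and a general spacelike axis is obtained from this by a rigid motion. The hyperbolic plane is $\mathbb H^2(r)=\{p\in\mathbb L^3:\langle p,p\rangle=-r^2,\ z>0\}$. *)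

From Stdlib Require Import Reals.
From Coquelicot Require Import Coquelicot.
Open Scope R_scope.

Record vec3 := V3 { vx : R; vy : R; vz : R }.

Definition vadd (p q : vec3) : vec3 := V3 (vx p + vx q) (vy p + vy q) (vz p + vz q).
Definition vscale (c : R) (p : vec3) : vec3 := V3 (c * vx p) (c * vy p) (c * vz p).

Definition lor (p q : vec3) : R := vx p * vx q + vy p * vy q - vz p * vz q.

Definition timelike (v : vec3) : Prop := lor v v < 0.

Definition e1 : vec3 := V3 1 0 0.

(** Rotations about the x-axis (spacelike axis). *)
Definition rotx (theta : R) (p : vec3) : vec3 :=
  V3 (vx p) (cosh theta * vy p + sinh theta * vz p)
            (sinh theta * vy p + cosh theta * vz p).

Definition lorentz_linear (A : vec3 -> vec3) : Prop :=
  (forall p q, A (vadd p q) = vadd (A p) (A q)) /\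
  (forall c p, A (vscale c p) = vscale c (A p)) /\
  (forall p q, lor (A p) (A q) = lor p q).

Definition rigid_motion (A : vec3 -> vec3) (b : vec3) : Prop := lorentz_linear A.

Definition motion (A : vec3 -> vec3) (b : vec3) (p : vec3) : vec3 := vadd (A p) b.

Definition on_x_axis (p : vec3) : Prop := vy p = 0 /\ vz p = 0.

Definition in_H2 (r : R) (p : vec3) : Prop := lor p p = - r ^ 2 /\ 0 < vz p.

Definition open2 (U : R -> R -> Prop) : Prop :=
  forall u v, U u v -> exists d, 0 < d /\
    forall u' v', Rabs (u' - u) < d -> Rabs (v' - v) < d -> U u' v'.

Definition near3 (d : R) (p q : vec3) : Prop :=
  Rabs (vx q - vx p) < d /\ Rabs (vy q - vy p) < d /\ Rabs (vz q - vz p) < d.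

Definition open3 (W : vec3 -> Prop) : Prop :=
  forall p, W p -> exists d, 0 < d /\ forall q, near3 d p q -> W q.

Definition rel_open (S P : vec3 -> Prop) : Prop :=
  forall p, S p -> P p -> exists d, 0 < d /\ forall q, S q -> near3 d p q -> P q.

Definition connected (S : vec3 -> Prop) : Prop :=
  forall P : vec3 -> Prop, rel_open S P -> rel_open S (fun q => ~ P q) ->
    (forall p, S p -> P p) \/ (forall p, S p -> ~ P p).

Definition cont2 (U : R -> R -> Prop) (g : R -> R -> R) : Prop :=
  forall u v, U u v -> forall eps, 0 < eps -> exists d, 0 < d /\
    forall u' v', U u' v' -> Rabs (u' - u) < d -> Rabs (v' - v) < d ->
      Rabs (g u' v' - g u v) < eps.

Definition du (f : R -> R -> R) : R -> R -> R := fun u v => Derive (fun s => f s v) u.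
Definition dv (f : R -> R -> R) : R -> R -> R := fun u v => Derive (fun t => f u t) v.

Definition ex_du (U : R -> R -> Prop) (f : R -> R -> R) : Prop :=
  forall u v, U u v -> ex_derive (fun s => f s v) u.
Definition ex_dv (U : R -> R -> Prop) (f : R -> R -> R) : Prop :=
  forall u v, U u v -> ex_derive (fun t => f u t) v.

Definition C2 (U : R -> R -> Prop) (f : R -> R -> R) : Prop :=
  cont2 U f /\ ex_du U f /\ ex_dv U f /\ cont2 U (du f) /\ cont2 U (dv f) /\
  ex_du U (du f) /\ ex_dv U (du f) /\ ex_du U (dv f) /\ ex_dv U (dv f) /\
  cont2 U (du (du f)) /\ cont2 U (dv (du f)) /\
  cont2 U (du (dv f)) /\ cont2 U (dv (dv f)).

Definition cX (X : R -> R -> vec3) : R -> R -> R := fun u v => vx (X u v).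
Definition cY (X : R -> R -> vec3) : R -> R -> R := fun u v => vy (X u v).
Definition cZ (X : R -> R -> vec3) : R -> R -> R := fun u v => vz (X u v).

Definition vdu (X : R -> R -> vec3) : R -> R -> vec3 :=
  fun u v => V3 (du (cX X) u v) (du (cY X) u v) (du (cZ X) u v).
Definition vdv (X : R -> R -> vec3) : R -> R -> vec3 :=
  fun u v => V3 (dv (cX X) u v) (dv (cY X) u v) (dv (cZ X) u v).

(** (U, X) is a local parametrization (chart) of S: a C^2 injective map from
    an open U ⊆ R^2, which is a homeomorphism onto S ∩ W for some open W,
    whose induced metric (first fundamental form w.r.t. lor) is positive definite. *)
Definition is_chart (S : vec3 -> Prop) (U : R -> R -> Prop) (X : R -> R -> vec3) : Prop :=
  open2 U /\
  C2 U (cX X) /\ C2 U (cY X) /\ C2 U (cZ X) /\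
  (forall u v, U u v -> S (X u v)) /\
  (forall u v u' v', U u v -> U u' v' -> X u v = X u' v' -> u = u' /\ v = v') /\
  (exists W, open3 W /\ (forall u v, U u v -> W (X u v)) /\
     (forall q, S q -> W q -> exists u v, U u v /\ X u v = q)) /\
  (forall u v, U u v -> forall eps, 0 < eps -> exists d, 0 < d /\
     forall u' v', U u' v' -> near3 d (X u v) (X u' v') ->
       Rabs (u' - u) < eps /\ Rabs (v' - v) < eps) /\
  (forall u v, U u v ->
     let E := lor (vdu X u v) (vdu X u v) in
     let F := lor (vdu X u v) (vdv X u v) in
     let G := lor (vdv X u v) (vdv X u v) in
     0 < E /\ 0 < E * G - F * F).

Definition spacelike_surface (S : vec3 -> Prop) : Prop :=
  forall p, S p -> exists U X, is_chart S U X /\ exists u v, U u v /\ X u v = p.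

Definition unit_normal_field (S : vec3 -> Prop) (N : vec3 -> vec3) : Prop :=
  (forall p, S p -> lor (N p) (N p) = -1) /\
  (forall U X, is_chart S U X -> forall u v, U u v ->
     lor (N (X u v)) (vdu X u v) = 0 /\ lor (N (X u v)) (vdv X u v) = 0) /\
  (forall p, S p -> forall eps, 0 < eps -> exists d, 0 < d /\
     forall q, S q -> near3 d p q -> near3 eps (N p) (N q)).

(** Mean curvature at X(u,v): trace (w.r.t. the induced metric) of the second
    fundamental form h_ij = <X_ij, N>, i.e. H = (G l - 2 F m + E n)/(E G - F^2). *)
Definition mean_curv (X : R -> R -> vec3) (N : vec3 -> vec3) (u v : R) : R :=
  let Xu := vdu X u v in
  let Xv := vdv X u v in
  let Nn := N (X u v) in
  let E := lor Xu Xu in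
  let F := lor Xu Xv in
  let G := lor Xv Xv in
  let l := lor (vdu (vdu X) u v) Nn in
  let m := lor (vdv (vdu X) u v) Nn in
  let n := lor (vdv (vdv X) u v) Nn in
  (G * l - 2 * F * m + E * n) / (E * G - F * F).

From Stdlib Require Import Reals Lra Psatz FunctionalExtensionality Classical.
From Coquelicot Require Import Coquelicot.
Open Scope R_scope.

(* A rotation f about L preserves S, and pushing a chart of S forward by f turns
   N into (+-1) df(N) and H into (+-1) H with the same sign.  Comparing the
   prescribed values of H at p and at f(p) therefore gives
     <N(p), a> <f(p), a> = <df(N(p)), a> <p, a>.
   For the rotations of angles 1 and -1, and a not orthogonal to L, these two
   equations force p - c to be a multiple of N(p), where c is the point of L with
   <c, a> = 0.  Hence <p - c, p - c> has zero derivative along S, so it is a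
   negative constant -r^2 on the connected surface, and p - c stays in one time
   cone: S lies in a hyperbolic plane of radius r centred at c. *)

(** * Lorentz-Minkowski linear algebra *)

Lemma vec3_ext (p q : vec3) : vx p = vx q -> vy p = vy q -> vz p = vz q -> p = q.
Proof. destruct p, q; simpl; intros; subst; reflexivity. Qed.

Definition vsub (p q : vec3) : vec3 := vadd p (vscale (-1) q).

Lemma lor_sym p q : lor p q = lor q p.
Proof. unfold lor; ring. Qed.

Lemma lor_vaddl p q r : lor (vadd p q) r = lor p r + lor q r.
Proof. unfold lor, vadd; simpl; ring. Qed.

Lemma lor_vscalel c p r : lor (vscale c p) r = c * lor p r.
Proof. unfold lor, vscale; simpl; ring. Qed.

Lemma lor_vscaler c p r : lor r (vscale c p) = c * lor r p.
Proof. unfold lor, vscale; simpl; ring. Qed.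

Lemma timelike_lor_neq0 u v : lor u u < 0 -> lor v v < 0 -> lor u v <> 0.
Proof.
  destruct u as [u1 u2 u3], v as [v1 v2 v3]; unfold lor; simpl; intros Hu Hv E.
  assert (E' : u1 * v1 + u2 * v2 = u3 * v3) by lra.
  assert (CS : (u1 * v1 + u2 * v2) ^ 2 <= (u1 * u1 + u2 * u2) * (v1 * v1 + v2 * v2))
    by (pose proof (pow2_ge_0 (u1 * v2 - u2 * v1)); nra).
  rewrite E' in CS. nra.
Qed.

Definition e2 : vec3 := V3 0 1 0.
Definition e3 : vec3 := V3 0 0 1.

Definition gram3 (b1 b2 b3 : vec3) : R :=
  lor b1 b1 * (lor b2 b2 * lor b3 b3 - lor b2 b3 * lor b2 b3)
  - lor b1 b2 * (lor b1 b2 * lor b3 b3 - lor b2 b3 * lor b1 b3)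
  + lor b1 b3 * (lor b1 b2 * lor b2 b3 - lor b2 b2 * lor b1 b3).

(* gram3 is minus the square of the Euclidean determinant, so its non-vanishing
   means that b1, b2, b3 is a basis. *)
Lemma lor_basis_eq x y b1 b2 b3 : gram3 b1 b2 b3 <> 0 ->
  lor x b1 = lor y b1 -> lor x b2 = lor y b2 -> lor x b3 = lor y b3 -> x = y.
Proof.
  destruct x as [x1 x2 x3], y as [y1 y2 y3], b1 as [a1 a2 a3], b2 as [b1' b2' b3'],
    b3 as [c1 c2 c3]; unfold gram3, lor; simpl; intros hg h1 h2 h3.
  set (D := a1 * (b2' * c3 - b3' * c2) - a2 * (b1' * c3 - b3' * c1)
            + a3 * (b1' * c2 - b2' * c1)).
  assert (hD : D <> 0).
  { intro E; apply hg. replace 0 with (- D ^ 2) by (rewrite E; ring). unfold D; ring. }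
  set (l1 := (x1 - y1) * a1 + (x2 - y2) * a2 - (x3 - y3) * a3).
  set (l2 := (x1 - y1) * b1' + (x2 - y2) * b2' - (x3 - y3) * b3').
  set (l3 := (x1 - y1) * c1 + (x2 - y2) * c2 - (x3 - y3) * c3).
  assert (L : l1 = 0 /\ l2 = 0 /\ l3 = 0) by (unfold l1, l2, l3; lra).
  (* Cramer's rule for the system lor (x - y) b_i = 0. *)
  assert (E1 : D * (x1 - y1) = (b2' * c3 - b3' * c2) * l1 - (a2 * c3 - a3 * c2) * l2
                               + (a2 * b3' - a3 * b2') * l3) by (unfold D, l1, l2, l3; ring).
  assert (E2 : D * (x2 - y2) = - (b1' * c3 - b3' * c1) * l1 + (a1 * c3 - a3 * c1) * l2
                               - (a1 * b3' - a3 * b1') * l3) by (unfold D, l1, l2, l3; ring).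
  assert (E3 : D * (y3 - x3) = (b1' * c2 - b2' * c1) * l1 - (a1 * c2 - a2 * c1) * l2
                               + (a1 * b2' - a2 * b1') * l3) by (unfold D, l1, l2, l3; ring).
  destruct L as (-> & -> & ->).
  assert (Z : forall w, D * w = 0 -> w = 0)
    by (intros w Hw; apply (Rmult_eq_reg_l D); lra).
  assert (Z1 := Z (x1 - y1) ltac:(lra)); assert (Z2 := Z (x2 - y2) ltac:(lra)).
  assert (Z3 := Z (y3 - x3) ltac:(lra)).
  apply vec3_ext; simpl; lra.
Qed.

Definition linear3 (M : vec3 -> vec3) : Prop :=
  (forall p q, M (vadd p q) = vadd (M p) (M q)) /\
  (forall c p, M (vscale c p) = vscale c (M p)).

Lemma lorentz_linear3 A : lorentz_linear A -> linear3 A.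
Proof. intros [HD [HZ _]]; split; assumption. Qed.

Lemma linear3_matrix M p : linear3 M -> M p =
  V3 (vx p * vx (M e1) + vy p * vx (M e2) + vz p * vx (M e3))
     (vx p * vy (M e1) + vy p * vy (M e2) + vz p * vy (M e3))
     (vx p * vz (M e1) + vy p * vz (M e2) + vz p * vz (M e3)).
Proof.
  intros [HD HZ].
  replace p with (vadd (vadd (vscale (vx p) e1) (vscale (vy p) e2)) (vscale (vz p) e3)) at 1
    by (apply vec3_ext; unfold vadd, vscale; simpl; ring).
  rewrite !HD, !HZ. apply vec3_ext; unfold vadd, vscale; simpl; ring.
Qed.

Lemma linear3_vsub M p q : linear3 M -> M (vsub p q) = vsub (M p) (M q).
Proof. intros [HD HZ]; unfold vsub; rewrite HD, HZ; reflexivity. Qed.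

Lemma div_succ_mul_lt eps K : 0 < eps -> 0 <= K -> eps / (1 + K) * K < eps.
Proof.
  intros He HK. apply (Rmult_lt_reg_r (1 + K)); [lra|].
  replace (eps / (1 + K) * K * (1 + K)) with (eps * K) by (field; lra). nra.
Qed.

Lemma Rabs_comb3_le x1 x2 x3 c1 c2 c3 d : Rabs x1 < d -> Rabs x2 < d -> Rabs x3 < d ->
  Rabs (x1 * c1 + x2 * c2 + x3 * c3) <= d * (Rabs c1 + Rabs c2 + Rabs c3).
Proof.
  intros H1 H2 H3.
  pose proof (Rabs_triang (x1 * c1 + x2 * c2) (x3 * c3)).
  pose proof (Rabs_triang (x1 * c1) (x2 * c2)).
  rewrite !Rabs_mult in *.
  pose proof (Rabs_pos c1); pose proof (Rabs_pos c2); pose proof (Rabs_pos c3).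
  pose proof (Rmult_le_compat_r _ _ _ (Rabs_pos c1) (Rlt_le _ _ H1)).
  pose proof (Rmult_le_compat_r _ _ _ (Rabs_pos c2) (Rlt_le _ _ H2)).
  pose proof (Rmult_le_compat_r _ _ _ (Rabs_pos c3) (Rlt_le _ _ H3)).
  lra.
Qed.

Lemma linear3_near3 M : linear3 M -> forall eps, 0 < eps -> exists d, 0 < d /\
  forall p q, near3 d p q -> near3 eps (M p) (M q).
Proof.
  intros HM eps Heps.
  set (K := Rabs (vx (M e1)) + Rabs (vx (M e2)) + Rabs (vx (M e3))
          + Rabs (vy (M e1)) + Rabs (vy (M e2)) + Rabs (vy (M e3))
          + Rabs (vz (M e1)) + Rabs (vz (M e2)) + Rabs (vz (M e3))).
  assert (HK : 0 <= K) by (unfold K; repeat apply Rplus_le_le_0_compat; apply Rabs_pos).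
  exists (eps / (1 + K)); split; [apply Rdiv_lt_0_compat; lra|].
  intros p q (N1 & N2 & N3).
  assert (Row : forall c1 c2 c3, Rabs c1 + Rabs c2 + Rabs c3 <= K ->
    Rabs ((vx q - vx p) * c1 + (vy q - vy p) * c2 + (vz q - vz p) * c3) < eps).
  { intros c1 c2 c3 Hc. eapply Rle_lt_trans; [apply Rabs_comb3_le; eassumption|].
    eapply Rle_lt_trans; [|apply (div_succ_mul_lt eps K); assumption].
    apply Rmult_le_compat_l; [apply Rlt_le, Rdiv_lt_0_compat|]; lra. }
  pose proof (Rabs_pos (vx (M e1))); pose proof (Rabs_pos (vx (M e2)));
  pose proof (Rabs_pos (vx (M e3))); pose proof (Rabs_pos (vy (M e1)));
  pose proof (Rabs_pos (vy (M e2))); pose proof (Rabs_pos (vy (M e3)));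
  pose proof (Rabs_pos (vz (M e1))); pose proof (Rabs_pos (vz (M e2)));
  pose proof (Rabs_pos (vz (M e3))).
  unfold near3; rewrite (linear3_matrix M p HM), (linear3_matrix M q HM); simpl; repeat split;
  match goal with
  | |- Rabs (?a1 * ?c1 + ?a2 * ?c2 + ?a3 * ?c3 - (?b1 * _ + ?b2 * _ + ?b3 * _)) < _ =>
    replace (a1 * c1 + a2 * c2 + a3 * c3 - (b1 * c1 + b2 * c2 + b3 * c3))
      with ((a1 - b1) * c1 + (a2 - b2) * c2 + (a3 - b3) * c3) by ring;
    apply Row; unfold K; lra end.
Qed.

Lemma near3_vadd d p q c : near3 d p q -> near3 d (vadd p c) (vadd q c).
Proof.
  unfold near3, vadd; simpl.
  replace (vx q + vx c - (vx p + vx c)) with (vx q - vx p) by ring.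
  replace (vy q + vy c - (vy p + vy c)) with (vy q - vy p) by ring.
  replace (vz q + vz c - (vz p + vz c)) with (vz q - vz p) by ring. auto.
Qed.

Lemma lorentz_linear_comp F G :
  lorentz_linear F -> lorentz_linear G -> lorentz_linear (fun p => F (G p)).
Proof.
  intros (FD & FZ & FL) (GD & GZ & GL); split; [|split]; intros.
  - rewrite GD, FD; reflexivity.
  - rewrite GZ, FZ; reflexivity.
  - rewrite FL, GL; reflexivity.
Qed.

(* A Lorentz isometry maps e1, e2, e3 to a Lorentz-orthonormal frame, so the
   coordinates of v in that frame are read off with lor. *)
Definition lor_inv (A : vec3 -> vec3) (v : vec3) : vec3 :=
  V3 (lor v (A e1)) (lor v (A e2)) (- lor v (A e3)).

Section LorentzInverse.
Variable A : vec3 -> vec3.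
Hypothesis HA : lorentz_linear A.

Let A_lor p q : lor (A p) (A q) = lor p q.
Proof. destruct HA as (_ & _ & H); apply H. Qed.

Lemma lor_inv_l v : lor_inv A (A v) = v.
Proof. apply vec3_ext; unfold lor_inv; simpl; rewrite A_lor; unfold lor; simpl; ring. Qed.

Lemma lor_inv_r v : A (lor_inv A v) = v.
Proof.
  apply (lor_basis_eq _ _ (A e1) (A e2) (A e3)).
  - unfold gram3; rewrite !A_lor; unfold lor; simpl; lra.
  - rewrite A_lor; unfold lor_inv, lor at 1; simpl; ring.
  - rewrite A_lor; unfold lor_inv, lor at 1; simpl; ring.
  - rewrite A_lor; unfold lor_inv, lor at 1; simpl; ring.
Qed.

Lemma lor_adjoint u v : lor (A u) v = lor u (lor_inv A v).
Proof. rewrite <- (lor_inv_r v) at 1; apply A_lor. Qed.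

Lemma lorentz_linear_inv : lorentz_linear (lor_inv A).
Proof.
  split; [|split]; intros.
  - apply vec3_ext; unfold lor_inv, vadd, lor; simpl; ring.
  - apply vec3_ext; unfold lor_inv, vscale, lor; simpl; ring.
  - rewrite <- A_lor, !lor_inv_r; reflexivity.
Qed.

End LorentzInverse.

Lemma cosh_sq_sub_sinh_sq t : cosh t * cosh t - sinh t * sinh t = 1.
Proof.
  unfold cosh, sinh.
  replace 1 with (exp t * exp (- t)) by (rewrite <- exp_plus, Rplus_opp_r; apply exp_0).
  field.
Qed.

Lemma rotx_lorentz t : lorentz_linear (rotx t).
Proof.
  pose proof (cosh_sq_sub_sinh_sq t) as H.
  split; [|split]; intros; [apply vec3_ext; unfold rotx, vadd, vscale; simpl; ring..|].
  unfold lor, rotx; simpl.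
  transitivity (vx p * vx q + (cosh t * cosh t - sinh t * sinh t) * (vy p * vy q - vz p * vz q));
    [ring|rewrite H; ring].
Qed.

Lemma cosh_opp t : cosh (- t) = cosh t.
Proof. unfold cosh; rewrite Ropp_involutive; field. Qed.

Lemma sinh_opp t : sinh (- t) = - sinh t.
Proof. unfold sinh; rewrite Ropp_involutive; field. Qed.

Lemma rotxK t p : rotx t (rotx (- t) p) = p.
Proof.
  pose proof (cosh_sq_sub_sinh_sq t) as H.
  apply vec3_ext; unfold rotx; simpl; rewrite ?cosh_opp, ?sinh_opp; [reflexivity| |].
  - transitivity ((cosh t * cosh t - sinh t * sinh t) * vy p); [ring|rewrite H; ring].
  - transitivity ((cosh t * cosh t - sinh t * sinh t) * vz p); [ring|rewrite H; ring].
Qed.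

Lemma rotxK' t p : rotx (- t) (rotx t p) = p.
Proof. rewrite <- (Ropp_involutive t) at 2; apply rotxK. Qed.

Lemma unit_normal_sign xu xv n m :
  0 < lor xu xu * lor xv xv - lor xu xv * lor xu xv ->
  lor n xu = 0 -> lor n xv = 0 -> lor n n = -1 ->
  lor m xu = 0 -> lor m xv = 0 -> lor m m = -1 ->
  exists e, e * e = 1 /\ m = vscale e n.
Proof.
  intros Hg h1 h2 hn h3 h4 hm.
  assert (Hm : m = vscale (- lor m n) n).
  { apply (lor_basis_eq _ _ xu xv n); rewrite ?lor_vscalel, ?h1, ?h2, ?h3, ?h4, ?hn;
      try ring.
    unfold gram3; rewrite (lor_sym xu n), (lor_sym xv n), h1, h2, hn; lra. }
  exists (- lor m n); split; [|exact Hm].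
  rewrite Hm, lor_vscalel, lor_vscaler, hn in hm. lra.
Qed.

(** * Affine combinations of C^2 functions *)

Definition affine3 (k1 k2 k3 k0 : R) (f g h : R -> R -> R) : R -> R -> R :=
  fun u v => k1 * f u v + k2 * g u v + k3 * h u v + k0.

Lemma is_derive_affine3 (f g h : R -> R) k1 k2 k3 k0 x df dg dh :
  is_derive f x df -> is_derive g x dg -> is_derive h x dh ->
  is_derive (fun s => k1 * f s + k2 * g s + k3 * h s + k0) x (k1 * df + k2 * dg + k3 * dh).
Proof.
  intros Hf Hg Hh. auto_derive.
  - repeat split; eexists; eassumption.
  - change (Derive (fun x => f x) x) with (Derive f x).
    change (Derive (fun x => g x) x) with (Derive g x).
    change (Derive (fun x => h x) x) with (Derive h x).
    rewrite (is_derive_unique _ _ _ Hf), (is_derive_unique _ _ _ Hg),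
      (is_derive_unique _ _ _ Hh); ring.
Qed.

Lemma open2_locally U u v : open2 U -> U u v ->
  locally u (fun s => U s v) /\ locally v (fun t => U u t).
Proof.
  intros HU Huv. destruct (HU u v Huv) as [d [Hd H]].
  split; exists (mkposreal d Hd); intros y Hy; apply H; auto;
    rewrite Rminus_diag, Rabs_R0; exact Hd.
Qed.

Ltac C2_part := unfold C2 in *; tauto.

Lemma C2_ex_du U f : C2 U f -> ex_du U f.
Proof. intro; C2_part. Qed.

Lemma C2_ex_dv U f : C2 U f -> ex_dv U f.
Proof. intro; C2_part. Qed.

Section PartialDerivatives.
Variable U : R -> R -> Prop.
Hypothesis HU : open2 U.

Lemma du_ext F G : (forall u v, U u v -> F u v = G u v) ->
  forall u v, U u v -> du F u v = du G u v.
Proof.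
  intros HE u v Huv. apply Derive_ext_loc.
  apply (filter_imp (fun s => U s v)); [intros; apply HE; auto|].
  apply (open2_locally U u v HU Huv).
Qed.

Lemma dv_ext F G : (forall u v, U u v -> F u v = G u v) ->
  forall u v, U u v -> dv F u v = dv G u v.
Proof.
  intros HE u v Huv. apply Derive_ext_loc.
  apply (filter_imp (fun t => U u t)); [intros; apply HE; auto|].
  apply (open2_locally U u v HU Huv).
Qed.

Lemma ex_du_ext F G : (forall u v, U u v -> F u v = G u v) -> ex_du U F -> ex_du U G.
Proof.
  intros HE HF u v Huv. apply (ex_derive_ext_loc (fun s => F s v)); [|apply HF, Huv].
  apply (filter_imp (fun s => U s v)); [intros; apply HE; auto|].
  apply (open2_locally U u v HU Huv).
Qed.

Lemma ex_dv_ext F G : (forall u v, U u v -> F u v = G u v) -> ex_dv U F -> ex_dv U G.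
Proof.
  intros HE HF u v Huv. apply (ex_derive_ext_loc (fun t => F u t)); [|apply HF, Huv].
  apply (filter_imp (fun t => U u t)); [intros; apply HE; auto|].
  apply (open2_locally U u v HU Huv).
Qed.

Lemma cont2_ext F G : (forall u v, U u v -> F u v = G u v) -> cont2 U F -> cont2 U G.
Proof.
  intros HE HF u v Huv eps Heps. destruct (HF u v Huv eps Heps) as [d [Hd H]].
  exists d; split; [exact Hd|]. intros u' v' H' H1 H2. rewrite <- !HE; auto.
Qed.

Variables k1 k2 k3 : R.

Lemma cont2_affine3 k0 f g h : cont2 U f -> cont2 U g -> cont2 U h ->
  cont2 U (affine3 k1 k2 k3 k0 f g h).
Proof.
  intros Hf Hg Hh u v Huv eps Heps.
  set (K := Rabs k1 + Rabs k2 + Rabs k3).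
  assert (HK : 0 <= K) by (unfold K; pose proof (Rabs_pos k1); pose proof (Rabs_pos k2);
                           pose proof (Rabs_pos k3); lra).
  set (e := eps / (1 + K)).
  assert (He : 0 < e) by (apply Rdiv_lt_0_compat; lra).
  destruct (Hf u v Huv e He) as [d1 [Hd1 H1]].
  destruct (Hg u v Huv e He) as [d2 [Hd2 H2]].
  destruct (Hh u v Huv e He) as [d3 [Hd3 H3]].
  exists (Rmin d1 (Rmin d2 d3)); split; [repeat apply Rmin_pos; assumption|].
  intros u' v' HU' Hu Hv.
  pose proof (Rmin_l d1 (Rmin d2 d3)); pose proof (Rmin_r d1 (Rmin d2 d3));
  pose proof (Rmin_l d2 d3); pose proof (Rmin_r d2 d3).
  unfold affine3.
  replace (k1 * f u' v' + k2 * g u' v' + k3 * h u' v' + k0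
           - (k1 * f u v + k2 * g u v + k3 * h u v + k0))
    with ((f u' v' - f u v) * k1 + (g u' v' - g u v) * k2 + (h u' v' - h u v) * k3) by ring.
  eapply Rle_lt_trans; [|apply (div_succ_mul_lt eps K Heps HK)].
  apply Rabs_comb3_le; [apply H1 | apply H2 | apply H3]; auto; lra.
Qed.

Lemma is_derive_du_affine3 k0 f g h : ex_du U f -> ex_du U g -> ex_du U h ->
  forall u v, U u v -> is_derive (fun s => affine3 k1 k2 k3 k0 f g h s v) u
                                 (affine3 k1 k2 k3 0 (du f) (du g) (du h) u v).
Proof.
  intros Hf Hg Hh u v Huv. unfold affine3; rewrite Rplus_0_r.
  apply (is_derive_affine3 (fun s => f s v) (fun s => g s v) (fun s => h s v));
    apply Derive_correct; auto.
Qed.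

Lemma is_derive_dv_affine3 k0 f g h : ex_dv U f -> ex_dv U g -> ex_dv U h ->
  forall u v, U u v -> is_derive (fun t => affine3 k1 k2 k3 k0 f g h u t) v
                                 (affine3 k1 k2 k3 0 (dv f) (dv g) (dv h) u v).
Proof.
  intros Hf Hg Hh u v Huv. unfold affine3; rewrite Rplus_0_r.
  apply (is_derive_affine3 (fun t => f u t) (fun t => g u t) (fun t => h u t));
    apply Derive_correct; auto.
Qed.

Lemma du_affine3 k0 f g h : ex_du U f -> ex_du U g -> ex_du U h ->
  forall u v, U u v ->
  du (affine3 k1 k2 k3 k0 f g h) u v = affine3 k1 k2 k3 0 (du f) (du g) (du h) u v.
Proof. intros; apply is_derive_unique, is_derive_du_affine3; auto. Qed.

Lemma dv_affine3 k0 f g h : ex_dv U f -> ex_dv U g -> ex_dv U h ->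
  forall u v, U u v ->
  dv (affine3 k1 k2 k3 k0 f g h) u v = affine3 k1 k2 k3 0 (dv f) (dv g) (dv h) u v.
Proof. intros; apply is_derive_unique, is_derive_dv_affine3; auto. Qed.

Lemma ex_du_affine3 k0 f g h : ex_du U f -> ex_du U g -> ex_du U h ->
  ex_du U (affine3 k1 k2 k3 k0 f g h).
Proof. intros Hf Hg Hh u v Huv; eexists; apply is_derive_du_affine3; auto. Qed.

Lemma ex_dv_affine3 k0 f g h : ex_dv U f -> ex_dv U g -> ex_dv U h ->
  ex_dv U (affine3 k1 k2 k3 k0 f g h).
Proof. intros Hf Hg Hh u v Huv; eexists; apply is_derive_dv_affine3; auto. Qed.

Variables f g h : R -> R -> R.
Hypotheses (Cf : C2 U f) (Cg : C2 U g) (Ch : C2 U h).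

Lemma du_du_affine3 k0 u v : U u v ->
  du (du (affine3 k1 k2 k3 k0 f g h)) u v
  = affine3 k1 k2 k3 0 (du (du f)) (du (du g)) (du (du h)) u v.
Proof.
  intro Huv. rewrite (du_ext _ (affine3 k1 k2 k3 0 (du f) (du g) (du h)));
    [apply du_affine3| intros; apply du_affine3 |]; auto; C2_part.
Qed.

Lemma dv_du_affine3 k0 u v : U u v ->
  dv (du (affine3 k1 k2 k3 k0 f g h)) u v
  = affine3 k1 k2 k3 0 (dv (du f)) (dv (du g)) (dv (du h)) u v.
Proof.
  intro Huv. rewrite (dv_ext _ (affine3 k1 k2 k3 0 (du f) (du g) (du h)));
    [apply dv_affine3| intros; apply du_affine3 |]; auto; C2_part.
Qed.

Lemma du_dv_affine3 k0 u v : U u v ->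
  du (dv (affine3 k1 k2 k3 k0 f g h)) u v
  = affine3 k1 k2 k3 0 (du (dv f)) (du (dv g)) (du (dv h)) u v.
Proof.
  intro Huv. rewrite (du_ext _ (affine3 k1 k2 k3 0 (dv f) (dv g) (dv h)));
    [apply du_affine3| intros; apply dv_affine3 |]; auto; C2_part.
Qed.

Lemma dv_dv_affine3 k0 u v : U u v ->
  dv (dv (affine3 k1 k2 k3 k0 f g h)) u v
  = affine3 k1 k2 k3 0 (dv (dv f)) (dv (dv g)) (dv (dv h)) u v.
Proof.
  intro Huv. rewrite (dv_ext _ (affine3 k1 k2 k3 0 (dv f) (dv g) (dv h)));
    [apply dv_affine3| intros; apply dv_affine3 |]; auto; C2_part.
Qed.

Lemma C2_affine3 k0 : C2 U (affine3 k1 k2 k3 k0 f g h).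
Proof.
  assert (Edu : forall u v, U u v ->
    affine3 k1 k2 k3 0 (du f) (du g) (du h) u v = du (affine3 k1 k2 k3 k0 f g h) u v)
    by (intros; symmetry; apply du_affine3; auto; C2_part).
  assert (Edv : forall u v, U u v ->
    affine3 k1 k2 k3 0 (dv f) (dv g) (dv h) u v = dv (affine3 k1 k2 k3 k0 f g h) u v)
    by (intros; symmetry; apply dv_affine3; auto; C2_part).
  unfold C2; repeat split.
  - apply cont2_affine3; C2_part.
  - apply ex_du_affine3; C2_part.
  - apply ex_dv_affine3; C2_part.
  - apply (cont2_ext _ _ Edu), cont2_affine3; C2_part.
  - apply (cont2_ext _ _ Edv), cont2_affine3; C2_part.
  - apply (ex_du_ext _ _ Edu), ex_du_affine3; C2_part.
  - apply (ex_dv_ext _ _ Edu), ex_dv_affine3; C2_part.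
  - apply (ex_du_ext _ _ Edv), ex_du_affine3; C2_part.
  - apply (ex_dv_ext _ _ Edv), ex_dv_affine3; C2_part.
  - apply (cont2_ext _ _ (fun u v H => eq_sym (du_du_affine3 k0 u v H))).
    apply cont2_affine3; C2_part.
  - apply (cont2_ext _ _ (fun u v H => eq_sym (dv_du_affine3 k0 u v H))).
    apply cont2_affine3; C2_part.
  - apply (cont2_ext _ _ (fun u v H => eq_sym (du_dv_affine3 k0 u v H))).
    apply cont2_affine3; C2_part.
  - apply (cont2_ext _ _ (fun u v H => eq_sym (dv_dv_affine3 k0 u v H))).
    apply cont2_affine3; C2_part.
Qed.

End PartialDerivatives.

(** * Charts and mean curvature under Lorentz motions *)

Definition motion_param (M : vec3 -> vec3) (c : vec3) (X : R -> R -> vec3) :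
  R -> R -> vec3 := fun u v => motion M c (X u v).

Section MotionParam.
Variables (M : vec3 -> vec3) (c : vec3) (X : R -> R -> vec3).
Hypothesis HM : lorentz_linear M.

Let Y := motion_param M c X.

Let motion_matrix p : motion M c p =
  V3 (vx p * vx (M e1) + vy p * vx (M e2) + vz p * vx (M e3) + vx c)
     (vx p * vy (M e1) + vy p * vy (M e2) + vz p * vy (M e3) + vy c)
     (vx p * vz (M e1) + vy p * vz (M e2) + vz p * vz (M e3) + vz c).
Proof. unfold motion; rewrite (linear3_matrix M p (lorentz_linear3 M HM)); reflexivity. Qed.

Lemma cX_motion : cX Y = affine3 (vx (M e1)) (vx (M e2)) (vx (M e3)) (vx c) (cX X) (cY X) (cZ X).
Proof.
  do 2 (apply functional_extensionality; intro).
  unfold Y, motion_param, cX; rewrite motion_matrix; unfold affine3, cY, cZ; simpl; ring.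
Qed.

Lemma cY_motion : cY Y = affine3 (vy (M e1)) (vy (M e2)) (vy (M e3)) (vy c) (cX X) (cY X) (cZ X).
Proof.
  do 2 (apply functional_extensionality; intro).
  unfold Y, motion_param, cY; rewrite motion_matrix; unfold affine3, cX, cZ; simpl; ring.
Qed.

Lemma cZ_motion : cZ Y = affine3 (vz (M e1)) (vz (M e2)) (vz (M e3)) (vz c) (cX X) (cY X) (cZ X).
Proof.
  do 2 (apply functional_extensionality; intro).
  unfold Y, motion_param, cZ; rewrite motion_matrix; unfold affine3, cX, cY; simpl; ring.
Qed.

Lemma motion_derivative (D : (R -> R -> R) -> R -> R -> R) u v :
  (forall k1 k2 k3 k0, D (affine3 k1 k2 k3 k0 (cX X) (cY X) (cZ X)) u v
                       = affine3 k1 k2 k3 0 (D (cX X)) (D (cY X)) (D (cZ X)) u v) ->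
  V3 (D (cX Y) u v) (D (cY Y) u v) (D (cZ Y) u v)
  = M (V3 (D (cX X) u v) (D (cY X) u v) (D (cZ X) u v)).
Proof.
  intro HD. rewrite cX_motion, cY_motion, cZ_motion, !HD.
  rewrite (linear3_matrix M (V3 (D (cX X) u v) _ _) (lorentz_linear3 M HM)).
  unfold affine3; apply vec3_ext; simpl; ring.
Qed.

Variable U : R -> R -> Prop.
Hypotheses (HU : open2 U) (CX : C2 U (cX X)) (CY : C2 U (cY X)) (CZ : C2 U (cZ X)).

Lemma vdu_motion u v : U u v -> vdu Y u v = M (vdu X u v).
Proof. intro Huv. apply (motion_derivative du); intros; apply (du_affine3 U); auto; C2_part. Qed.

Lemma vdv_motion u v : U u v -> vdv Y u v = M (vdv X u v).
Proof. intro Huv. apply (motion_derivative dv); intros; apply (dv_affine3 U); auto; C2_part. Qed.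

Lemma vdudu_motion u v : U u v -> vdu (vdu Y) u v = M (vdu (vdu X) u v).
Proof.
  intro Huv. apply (motion_derivative (fun F => du (du F))); intros.
  apply (du_du_affine3 U); auto.
Qed.

Lemma vdvdu_motion u v : U u v -> vdv (vdu Y) u v = M (vdv (vdu X) u v).
Proof.
  intro Huv. apply (motion_derivative (fun F => dv (du F))); intros.
  apply (dv_du_affine3 U); auto.
Qed.

Lemma vdvdv_motion u v : U u v -> vdv (vdv Y) u v = M (vdv (vdv X) u v).
Proof.
  intro Huv. apply (motion_derivative (fun F => dv (dv F))); intros.
  apply (dv_dv_affine3 U); auto.
Qed.

End MotionParam.

Section InvariantSurface.
Variables (S : vec3 -> Prop) (M : vec3 -> vec3) (c : vec3).
Hypothesis HM : lorentz_linear M.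
Hypothesis HS : forall p, S (motion M c p) <-> S p.

Let g q := lor_inv M (vsub q c).

Let g_motion p : g (motion M c p) = p.
Proof.
  unfold g, motion; rewrite <- (lor_inv_l M HM p) at 2. f_equal.
  apply vec3_ext; unfold vsub, vadd, vscale; simpl; ring.
Qed.

Let motion_g q : motion M c (g q) = q.
Proof.
  unfold g, motion; rewrite (lor_inv_r M HM).
  apply vec3_ext; unfold vsub, vadd, vscale; simpl; ring.
Qed.

Let g_near3 eps : 0 < eps -> exists d, 0 < d /\ forall p q, near3 d p q -> near3 eps (g p) (g q).
Proof.
  intro He.
  destruct (linear3_near3 _ (lorentz_linear3 _ (lorentz_linear_inv M HM)) eps He) as [d [Hd H]].
  exists d; split; [exact Hd|]. intros p q Hpq; apply H, near3_vadd, Hpq.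
Qed.

Lemma chart_motion U X : is_chart S U X -> is_chart S U (motion_param M c X).
Proof.
  intros (HU & CX & CY & CZ & HSX & Hinj & (W & HW & HXW & HWX) & Hhom & Hmet).
  split; [exact HU|].
  split; [rewrite cX_motion by exact HM; apply C2_affine3; assumption|].
  split; [rewrite cY_motion by exact HM; apply C2_affine3; assumption|].
  split; [rewrite cZ_motion by exact HM; apply C2_affine3; assumption|].
  split; [intros u v Huv; apply HS, HSX, Huv|].
  split.
  { intros u v u' v' H H' E; apply Hinj; auto.
    rewrite <- (g_motion (X u v)), <- (g_motion (X u' v')); exact (f_equal g E). }
  split.
  { exists (fun q => W (g q)); split; [|split].
    - intros q Wq. destruct (HW _ Wq) as [d [Hd Hq]].
      destruct (g_near3 d Hd) as [d' [Hd' Hg]]. exists d'; split; auto.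
    - intros u v Huv; unfold motion_param; rewrite g_motion; auto.
    - intros q Sq Wq. destruct (HWX (g q)) as [u [v [Huv E]]]; auto.
      + apply HS; rewrite motion_g; exact Sq.
      + exists u, v; split; [exact Huv|]. unfold motion_param; rewrite E; apply motion_g. }
  split.
  { intros u v Huv eps He. destruct (Hhom u v Huv eps He) as [d [Hd H]].
    destruct (g_near3 d Hd) as [d' [Hd' Hg]]. exists d'; split; [exact Hd'|].
    intros u' v' Huv' Hn. apply H; auto.
    rewrite <- (g_motion (X u v)), <- (g_motion (X u' v')); apply Hg, Hn. }
  intros u v Huv. simpl.
  rewrite (vdu_motion M c X HM U), (vdv_motion M c X HM U) by assumption.
  destruct HM as (_ & _ & HL); rewrite !HL; apply Hmet, Huv.
Qed.

Variable N : vec3 -> vec3.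
Hypothesis HN : unit_normal_field S N.

Lemma mean_curv_motion U X u v : is_chart S U X -> U u v ->
  exists e, e * e = 1 /\ N (motion M c (X u v)) = vscale e (M (N (X u v))) /\
            mean_curv (motion_param M c X) N u v = e * mean_curv X N u v.
Proof.
  intros HX Huv. pose proof (chart_motion U X HX) as HY.
  pose proof HX as (HU & CX & CY & CZ & HSX & _ & _ & _ & Hmet).
  destruct HN as (Hunit & Hort & _).
  pose proof HM as (_ & _ & HL).
  destruct (Hort U X HX u v Huv) as [o1 o2].
  destruct (Hort _ _ HY u v Huv) as [o3 o4].
  change (motion_param M c X u v) with (motion M c (X u v)) in o3, o4.
  rewrite (vdu_motion M c X HM U) in o3 by assumption.
  rewrite (vdv_motion M c X HM U) in o4 by assumption.
  destruct (unit_normal_sign (M (vdu X u v)) (M (vdv X u v)) (M (N (X u v)))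
              (N (motion M c (X u v)))) as [e [He EN]];
    rewrite ?HL; auto.
  - destruct (Hmet u v Huv); lra.
  - apply Hunit, HS, HSX, Huv.
  - exists e; split; [exact He|]; split; [exact EN|].
    unfold mean_curv.
    rewrite (vdu_motion M c X HM U), (vdv_motion M c X HM U), (vdudu_motion M c X HM U),
      (vdvdu_motion M c X HM U), (vdvdv_motion M c X HM U) by assumption.
    change (motion_param M c X u v) with (motion M c (X u v)).
    rewrite EN, !lor_vscaler, !HL.
    destruct (Hmet u v Huv) as [_ Hp]. field; lra.
Qed.

Variables (alpha : R) (a : vec3).
Hypothesis Halpha : alpha <> 0.
Hypothesis Hsurf : spacelike_surface S.
Hypothesis Hden : forall p, S p -> lor p a <> 0.
Hypothesis HH : forall U X, is_chart S U X -> forall u v, U u v ->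
  mean_curv X N u v = alpha * lor (N (X u v)) a / lor (X u v) a.

Lemma prescribed_H_motion p : S p ->
  lor (N p) a * lor (motion M c p) a = lor (M (N p)) a * lor p a.
Proof.
  intro Sp. destruct (Hsurf p Sp) as (U & X & HX & u & v & Huv & <-).
  destruct (mean_curv_motion U X u v HX Huv) as (e & He & EN & Emc).
  pose proof (HH _ _ (chart_motion U X HX) u v Huv) as E.
  rewrite Emc, (HH _ _ HX u v Huv) in E. unfold motion_param in E.
  rewrite EN, lor_vscalel in E.
  assert (D1 := Hden _ Sp). assert (D2 := Hden _ (proj2 (HS _) Sp)).
  apply (Rmult_eq_reg_l (alpha * e)); [|apply Rmult_integral_contrapositive; split; nra].
  transitivity (e * (alpha * lor (N (X u v)) a / lor (X u v) a)
                * (lor (X u v) a * lor (motion M c (X u v)) a)); [field; auto|].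
  rewrite E; field; auto.
Qed.

End InvariantSurface.

(** * Rotations about the axis *)

Lemma lor_rotx t x a : lor (rotx t x) a = vx x * vx a
  + cosh t * (vy x * vy a - vz x * vz a) + sinh t * (vz x * vy a - vy x * vz a).
Proof. unfold lor, rotx; simpl; ring. Qed.

Lemma sinh_neq0 s : s <> 0 -> sinh s <> 0.
Proof.
  intro Hs; rewrite <- sinh_0; destruct (Rdichotomy _ _ Hs) as [H|H];
    apply sinh_lt in H; lra.
Qed.

(* The equations for the rotations of angles s and -s are, after taking their
   sum and difference, linear in the components of q and n orthogonal to e1;
   the timelike [a] makes that 2x2 system invertible. *)
Lemma rotx_pair_collinear (a n q : vec3) (beta s : R) :
  lor a a < 0 -> vx a <> 0 -> s <> 0 -> lor n a <> 0 ->
  lor n a * (lor (rotx s q) a + beta) = lor (rotx s n) a * (lor q a + beta) ->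
  lor n a * (lor (rotx (- s) q) a + beta) = lor (rotx (- s) n) a * (lor q a + beta) ->
  vsub q (vscale (- beta / vx a) e1) = vscale ((lor q a + beta) / lor n a) n.
Proof.
  intros Ha Ha1 Hs HP Ep Em.
  assert (HSh := sinh_neq0 s Hs).
  assert (HC : cosh s - 1 <> 0).
  { pose proof (cosh_sq_sub_sinh_sq s). intro E.
    replace (cosh s) with 1 in * by lra. nra. }
  rewrite !lor_rotx, cosh_opp, sinh_opp in *.
  destruct a as [a1 a2 a3], n as [n1 n2 n3], q as [q1 q2 q3].
  unfold lor, vsub, vadd, vscale in *; simpl in *.
  set (P := n1 * a1 + n2 * a2 - n3 * a3) in *.
  set (Q := q1 * a1 + q2 * a2 - q3 * a3 + beta) in *.
  assert (ED : (n3 * a2 - n2 * a3) * Q = P * (q3 * a2 - q2 * a3)).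
  { apply (Rmult_eq_reg_l (2 * sinh s)); [|lra]. unfold P, Q in *; nra. }
  assert (EC : (n2 * a2 - n3 * a3) * Q = P * (q2 * a2 - q3 * a3)).
  { apply (Rmult_eq_reg_l (2 * (cosh s - 1))); [|lra]. unfold P, Q in *; nra. }
  assert (Ha23 : a2 * a2 - a3 * a3 <> 0) by nra.
  assert (E2 : (a2 * a2 - a3 * a3) * (P * q2 - Q * n2) = 0).
  { transitivity (a2 * (P * (q2 * a2 - q3 * a3) - (n2 * a2 - n3 * a3) * Q)
                  + a3 * (P * (q3 * a2 - q2 * a3) - (n3 * a2 - n2 * a3) * Q)); [ring|].
    rewrite EC, ED; ring. }
  assert (E3 : (a2 * a2 - a3 * a3) * (P * q3 - Q * n3) = 0).
  { transitivity (a2 * (P * (q3 * a2 - q2 * a3) - (n3 * a2 - n2 * a3) * Q)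
                  + a3 * (P * (q2 * a2 - q3 * a3) - (n2 * a2 - n3 * a3) * Q)); [ring|].
    rewrite EC, ED; ring. }
  apply Rmult_integral in E2, E3.
  destruct E2 as [E2|E2]; [contradiction|]; destruct E3 as [E3|E3]; [contradiction|].
  apply vec3_ext; simpl.
  - apply (Rmult_eq_reg_l (P * a1)); [|apply Rmult_integral_contrapositive; split; assumption].
    transitivity (P * Q - P * (q2 * a2 - q3 * a3)); [unfold Q; field; assumption|].
    rewrite <- EC. unfold P in *; field; assumption.
  - apply (Rmult_eq_reg_l P); [|assumption].
    replace (P * (Q / P * n2)) with (Q * n2) by (field; assumption). lra.
  - apply (Rmult_eq_reg_l P); [|assumption].
    replace (P * (Q / P * n3)) with (Q * n3) by (field; assumption). lra.
Qed.

Definition axis_coord (A : vec3 -> vec3) (b p : vec3) : vec3 := lor_inv A (vsub p b).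

Definition axis_rot (A : vec3 -> vec3) (t : R) (p : vec3) : vec3 := A (rotx t (lor_inv A p)).

Definition axis_rot_shift (A : vec3 -> vec3) (b : vec3) (t : R) : vec3 :=
  vsub b (axis_rot A t b).

(* The point of the axis b + R (A e1) at which <., a> vanishes. *)
Definition axis_center (A : vec3 -> vec3) (b a : vec3) : vec3 :=
  motion A b (vscale (- lor b a / lor (A e1) a) e1).

Section AxisRotations.
Variables (A : vec3 -> vec3) (b : vec3).
Hypothesis HA : lorentz_linear A.

Lemma motion_axis_coord p : motion A b (axis_coord A b p) = p.
Proof.
  unfold motion, axis_coord; rewrite (lor_inv_r A HA).
  apply vec3_ext; unfold vsub, vadd, vscale; simpl; ring.
Qed.

Lemma vsub_motion q q' : vsub (motion A b q) (motion A b q') = A (vsub q q').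
Proof.
  destruct HA as (HD & HZ & _); unfold vsub, motion; rewrite HD, HZ.
  apply vec3_ext; unfold vadd, vscale; simpl; ring.
Qed.

Lemma axis_rot_lorentz t : lorentz_linear (axis_rot A t).
Proof.
  apply (lorentz_linear_comp A); [exact HA|].
  apply (lorentz_linear_comp (rotx t)); [apply rotx_lorentz | apply lorentz_linear_inv, HA].
Qed.

Lemma axis_rot_motion t p :
  motion (axis_rot A t) (axis_rot_shift A b t) p = motion A b (rotx t (axis_coord A b p)).
Proof.
  unfold motion at 2; change (A (rotx t (axis_coord A b p))) with (axis_rot A t (vsub p b)).
  rewrite (linear3_vsub _ p b (lorentz_linear3 _ (axis_rot_lorentz t))).
  unfold axis_rot_shift, motion, vsub; apply vec3_ext; unfold vadd, vscale; simpl; ring.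
Qed.

Variables (S : vec3 -> Prop) (N : vec3 -> vec3) (alpha : R) (a : vec3).
Hypothesis Hinv : forall theta q, S (motion A b q) -> S (motion A b (rotx theta q)).

Lemma axis_rot_invariant t p :
  S (motion (axis_rot A t) (axis_rot_shift A b t) p) <-> S p.
Proof.
  rewrite axis_rot_motion; split; intro H.
  - rewrite <- (motion_axis_coord p), <- (rotxK' t (axis_coord A b p)). apply Hinv, H.
  - apply Hinv; rewrite motion_axis_coord; exact H.
Qed.

Hypothesis Ha : timelike a.
Hypothesis Halpha : alpha <> 0.
Hypothesis Hsurf : spacelike_surface S.
Hypothesis HN : unit_normal_field S N.
Hypothesis Hden : forall p, S p -> lor p a <> 0.
Hypothesis HH : forall U X, is_chart S U X -> forall u v, U u v ->
  mean_curv X N u v = alpha * lor (N (X u v)) a / lor (X u v) a.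

Lemma normal_through_axis_center p : S p -> lor a (A e1) <> 0 ->
  exists k, k <> 0 /\ vsub p (axis_center A b a) = vscale k (N p).
Proof.
  intros Sp Hobl.
  set (q := axis_coord A b p); set (n := lor_inv A (N p)); set (a' := lor_inv A a).
  assert (Ep : p = motion A b q) by (symmetry; apply motion_axis_coord).
  assert (En : N p = A n) by (symmetry; apply lor_inv_r, HA).
  assert (Lmotion : forall x, lor (motion A b x) a = lor x a' + lor b a)
    by (intro; unfold motion; rewrite lor_vaddl, (lor_adjoint A HA); reflexivity).
  assert (Ratio : forall t, lor n a' * (lor (rotx t q) a' + lor b a)
                            = lor (rotx t n) a' * (lor q a' + lor b a)).
  { intro t.
    pose proof (prescribed_H_motion S (axis_rot A t) (axis_rot_shift A b t)
      (axis_rot_lorentz t) (axis_rot_invariant t) N HN alpha a Halpha Hsurf Hden HH p Sp) as E.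
    rewrite axis_rot_motion, Lmotion in E; fold q in E.
    replace (lor p a) with (lor q a' + lor b a) in E
      by (rewrite Ep at 1; symmetry; apply Lmotion).
    unfold axis_rot in E; rewrite En, (lor_inv_l A HA), !(lor_adjoint A HA) in E.
    exact E. }
  assert (Ha' : lor a' a' < 0)
    by (unfold a'; destruct (lorentz_linear_inv A HA) as (_ & _ & L); rewrite L; exact Ha).
  assert (Ha1 : vx a' = lor (A e1) a) by apply lor_sym.
  assert (HP : lor n a' = lor (N p) a) by (rewrite En; symmetry; apply (lor_adjoint A HA)).
  assert (HNa : lor (N p) a <> 0).
  { apply timelike_lor_neq0; [|exact Ha].
    destruct HN as (Hunit & _); rewrite (Hunit p Sp); lra. }
  pose proof (rotx_pair_collinear a' n q (lor b a) 1 Ha' ltac:(rewrite Ha1, lor_sym; exact Hobl)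
    R1_neq_R0 ltac:(rewrite HP; exact HNa) (Ratio 1) (Ratio (-1))) as Hcol.
  rewrite <- Lmotion, <- Ep, HP, Ha1 in Hcol.
  exists (lor p a / lor (N p) a); split.
  - apply Rmult_integral_contrapositive; split; [apply Hden, Sp | apply Rinv_neq_0_compat, HNa].
  - unfold axis_center; rewrite Ep at 1; rewrite vsub_motion, Hcol, En.
    destruct HA as (_ & HZ & _); apply HZ.
Qed.

End AxisRotations.

(** * Surfaces with concurrent normal lines *)

Lemma zero_partials_const_box (U : R -> R -> Prop) (f : R -> R -> R) u0 v0 d :
  (forall u v, Rabs (u - u0) < d -> Rabs (v - v0) < d -> U u v) ->
  (forall u v, U u v -> is_derive (fun s => f s v) u 0) ->
  (forall u v, U u v -> is_derive (fun t => f u t) v 0) ->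
  forall u v, Rabs (u - u0) < d -> Rabs (v - v0) < d -> f u v = f u0 v0.
Proof.
  intros Hbox Du Dv u v Hu Hv.
  assert (Hd : 0 < d) by (pose proof (Rabs_pos (u - u0)); lra).
  destruct (MVT_cor4 (fun s => f s v) (fun _ => 0) u0 (Rabs (u - u0))) with (b := u)
    as [c1 [Ec1 _]]; [intros s Hs; apply Du, Hbox; lra | lra |].
  destruct (MVT_cor4 (fun t => f u0 t) (fun _ => 0) v0 (Rabs (v - v0))) with (b := v)
    as [c2 [Ec2 _]];
    [intros t Ht; apply Dv, Hbox; [rewrite Rminus_diag, Rabs_R0|]; lra | lra |].
  simpl in Ec1, Ec2; lra.
Qed.

Definition sq_dist (c p : vec3) : R := lor (vsub p c) (vsub p c).

Lemma is_derive_sq_dist (Z : R -> vec3) x dz c :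
  is_derive (fun s => vx (Z s)) x (vx dz) -> is_derive (fun s => vy (Z s)) x (vy dz) ->
  is_derive (fun s => vz (Z s)) x (vz dz) ->
  is_derive (fun s => sq_dist c (Z s)) x (2 * lor (vsub (Z x) c) dz).
Proof.
  intros Hf Hg Hh.
  apply (is_derive_ext (fun s => (vx (Z s) - vx c) * (vx (Z s) - vx c)
    + (vy (Z s) - vy c) * (vy (Z s) - vy c) - (vz (Z s) - vz c) * (vz (Z s) - vz c))).
  { intro s; unfold sq_dist, lor, vsub, vadd, vscale; simpl; ring. }
  replace (2 * lor (vsub (Z x) c) dz) with
    (2 * (vx (Z x) - vx c) * vx dz + 2 * (vy (Z x) - vy c) * vy dz
     - 2 * (vz (Z x) - vz c) * vz dz) by (unfold lor, vsub, vadd, vscale; simpl; ring).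
  pose (f := fun s => vx (Z s)); pose (g := fun s => vy (Z s)); pose (h := fun s => vz (Z s)).
  change (is_derive (fun s => (f s - vx c) * (f s - vx c) + (g s - vy c) * (g s - vy c)
    - (h s - vz c) * (h s - vz c)) x (2 * (f x - vx c) * vx dz + 2 * (g x - vy c) * vy dz
     - 2 * (h x - vz c) * vz dz)).
  auto_derive; [repeat split; eexists; eassumption|].
  change (Derive (fun s => f s) x) with (Derive f x).
  change (Derive (fun s => g s) x) with (Derive g x).
  change (Derive (fun s => h s) x) with (Derive h x).
  rewrite (is_derive_unique f x _ Hf), (is_derive_unique g x _ Hg),
    (is_derive_unique h x _ Hh); ring.
Qed.

Lemma near3_mono d d' p q : d <= d' -> near3 d p q -> near3 d' p q.
Proof. unfold near3; intros H (h1 & h2 & h3); repeat split; lra. Qed.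

Lemma sq_dist_locally_const S N c : spacelike_surface S -> unit_normal_field S N ->
  (forall p, S p -> exists k, vsub p c = vscale k (N p)) ->
  forall p, S p -> exists d, 0 < d /\ forall q, S q -> near3 d p q -> sq_dist c q = sq_dist c p.
Proof.
  intros Hsurf HN Hcol p Sp.
  destruct (Hsurf p Sp) as (U & X & HX & u0 & v0 & Huv0 & <-).
  pose proof HX as (HU & CX & CY & CZ & HSX & _ & (W & HW & HXW & HWX) & Hhom & _).
  destruct HN as (_ & Hort & _).
  assert (Hrad : forall u v, U u v ->
    lor (vsub (X u v) c) (vdu X u v) = 0 /\ lor (vsub (X u v) c) (vdv X u v) = 0).
  { intros u v Huv. destruct (Hcol _ (HSX u v Huv)) as [k ->].
    rewrite !lor_vscalel; destruct (Hort U X HX u v Huv) as [-> ->]; split; ring. }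
  set (f := fun u v => sq_dist c (X u v)).
  assert (Du : forall u v, U u v -> is_derive (fun s => f s v) u 0).
  { intros u v Huv. replace 0 with (2 * lor (vsub (X u v) c) (vdu X u v))
      by (rewrite (proj1 (Hrad u v Huv)); ring).
    apply (is_derive_sq_dist (fun s => X s v)); apply Derive_correct;
      [exact (C2_ex_du U _ CX u v Huv) | exact (C2_ex_du U _ CY u v Huv)
      | exact (C2_ex_du U _ CZ u v Huv)]. }
  assert (Dv : forall u v, U u v -> is_derive (fun t => f u t) v 0).
  { intros u v Huv. replace 0 with (2 * lor (vsub (X u v) c) (vdv X u v))
      by (rewrite (proj2 (Hrad u v Huv)); ring).
    apply (is_derive_sq_dist (fun t => X u t)); apply Derive_correct;
      [exact (C2_ex_dv U _ CX u v Huv) | exact (C2_ex_dv U _ CY u v Huv)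
      | exact (C2_ex_dv U _ CZ u v Huv)]. }
  destruct (HU u0 v0 Huv0) as [dl [Hdl Hbox]].
  destruct (Hhom u0 v0 Huv0 dl Hdl) as [d1 [Hd1 Hh]].
  destruct (HW (X u0 v0) (HXW u0 v0 Huv0)) as [d2 [Hd2 Hw]].
  exists (Rmin d1 d2); split; [apply Rmin_pos; assumption|].
  intros q Sq Hq.
  destruct (HWX q Sq) as (u & v & Huv & <-); [apply Hw, (near3_mono _ _ _ _ (Rmin_r d1 d2) Hq)|].
  destruct (Hh u v Huv (near3_mono _ _ _ _ (Rmin_l d1 d2) Hq)) as [Hu Hv].
  apply (zero_partials_const_box U f u0 v0 dl); assumption.
Qed.

Lemma connected_locally_const S (F : vec3 -> R) : connected S ->
  (forall p, S p -> exists d, 0 < d /\ forall q, S q -> near3 d p q -> F q = F p) ->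
  forall p0 p, S p0 -> S p -> F p = F p0.
Proof.
  intros Hconn Hloc p0 p Sp0 Sp.
  destruct (Hconn (fun q => F q = F p0)) as [H|H].
  - intros x Sx Ex. destruct (Hloc x Sx) as [d [Hd Hx]].
    exists d; split; [exact Hd|]. intros q Sq Hq; rewrite Hx; assumption.
  - intros x Sx Ex. destruct (Hloc x Sx) as [d [Hd Hx]].
    exists d; split; [exact Hd|]. intros q Sq Hq; rewrite Hx; assumption.
  - apply H, Sp.
  - exfalso; apply (H p0 Sp0); reflexivity.
Qed.

Lemma connected_sign S (F : vec3 -> R) : connected S ->
  (forall p eps, S p -> 0 < eps -> exists d, 0 < d /\
     forall q, S q -> near3 d p q -> Rabs (F q - F p) < eps) ->
  (forall p, S p -> F p <> 0) ->
  exists s, s * s = 1 /\ forall p, S p -> 0 < s * F p.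
Proof.
  intros Hconn Hcont Hnz.
  destruct (Hconn (fun q => 0 < F q)) as [H|H].
  - intros x Sx Px. destruct (Hcont x (F x) Sx Px) as [d [Hd Hx]].
    exists d; split; [exact Hd|]. intros q Sq Hq.
    specialize (Hx q Sq Hq); apply Rabs_def2 in Hx; lra.
  - intros x Sx Px. assert (F x < 0) by (pose proof (Hnz x Sx); lra).
    destruct (Hcont x (- F x) Sx) as [d [Hd Hx]]; [lra|].
    exists d; split; [exact Hd|]. intros q Sq Hq.
    specialize (Hx q Sq Hq); apply Rabs_def2 in Hx; lra.
  - exists 1; split; [ring|]. intros p Sp; rewrite Rmult_1_l; apply H, Sp.
  - exists (-1); split; [ring|]. intros p Sp.
    pose proof (Hnz p Sp); pose proof (H p Sp); lra.
Qed.

Lemma timelike_vz_neq0 w : lor w w < 0 -> vz w <> 0.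
Proof. unfold lor; intros Hw E; rewrite E in Hw; nra. Qed.

Lemma concurrent_normals_hyperboloid S N c B :
  spacelike_surface S -> connected S -> unit_normal_field S N -> lorentz_linear B ->
  (forall p, S p -> exists k, k <> 0 /\ vsub p c = vscale k (N p)) ->
  exists r s, 0 < r /\ s * s = 1 /\
    forall p, S p -> sq_dist c p = - r ^ 2 /\ 0 < s * vz (B (vsub p c)).
Proof.
  intros Hsurf Hconn HN HB Hcol.
  assert (Hneg : forall p, S p -> sq_dist c p < 0).
  { intros p Sp. destruct (Hcol p Sp) as (k & Hk & Ek).
    unfold sq_dist; rewrite Ek, lor_vscalel, lor_vscaler.
    destruct HN as (Hunit & _); rewrite (Hunit p Sp).
    pose proof (Rsqr_pos_lt k Hk); unfold Rsqr in *; lra. }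
  destruct (connected_sign S (fun p => vz (B (vsub p c))) Hconn) as (s & Hs & Hsign).
  { intros p eps Sp He.
    destruct (linear3_near3 B (lorentz_linear3 B HB) eps He) as (d & Hd & H).
    exists d; split; [exact Hd|]. intros q Sq Hq.
    destruct (H _ _ (near3_vadd d p q (vscale (-1) c) Hq)) as (_ & _ & Hz); exact Hz. }
  { intros p Sp. apply timelike_vz_neq0.
    destruct HB as (_ & _ & HL); rewrite HL; apply Hneg, Sp. }
  destruct (classic (exists p0, S p0)) as [[p0 Sp0]|Hempty].
  - pose proof (Hneg p0 Sp0).
    exists (sqrt (- sq_dist c p0)), s; split; [apply sqrt_lt_R0; lra|]; split; [exact Hs|].
    intros p Sp; split; [|apply Hsign, Sp].
    rewrite pow2_sqrt by lra.
    assert (Hcol' : forall q, S q -> exists k, vsub q c = vscale k (N q))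
      by (intros q Sq; destruct (Hcol q Sq) as (k & _ & Hk); exists k; exact Hk).
    rewrite (connected_locally_const S (sq_dist c) Hconn
               (sq_dist_locally_const S N c Hsurf HN Hcol') p0 p Sp0 Sp); ring.
  - exists 1, s; split; [lra|]; split; [exact Hs|].
    intros p Sp; exfalso; apply Hempty; exists p; exact Sp.
Qed.

Definition flip_z (s : R) (v : vec3) : vec3 := V3 (vx v) (vy v) (s * vz v).

Lemma flip_z_lorentz s : s * s = 1 -> lorentz_linear (flip_z s).
Proof.
  intro Hs; split; [|split]; intros;
    [apply vec3_ext; unfold flip_z, vadd, vscale; simpl; ring..|].
  unfold lor, flip_z; simpl.
  transitivity (vx p * vx q + vy p * vy q - (s * s) * (vz p * vz q)); [ring|rewrite Hs; ring].
Qed.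

Lemma axis_frame_H2 (S : vec3 -> Prop) A b c t0 r s :
  lorentz_linear A -> s * s = 1 -> c = motion A b (vscale t0 e1) ->
  (forall p, S p -> sq_dist c p = - r ^ 2 /\ 0 < s * vz (lor_inv A (vsub p c))) ->
  exists B c', rigid_motion B c' /\
    (forall t, on_x_axis (motion B c' (motion A b (vscale t e1)))) /\
    (forall p, S p -> in_H2 r (motion B c' p)).
Proof.
  intros HA Hs Hc HS.
  set (B := fun p => flip_z s (lor_inv A p)).
  assert (HB : lorentz_linear B)
    by exact (lorentz_linear_comp _ _ (flip_z_lorentz s Hs) (lorentz_linear_inv A HA)).
  assert (EB : forall x, motion B (vscale (-1) (B c)) x = flip_z s (lor_inv A (vsub x c))).
  { intro x. change (flip_z s (lor_inv A (vsub x c))) with (B (vsub x c)).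
    rewrite (linear3_vsub B x c (lorentz_linear3 B HB)); reflexivity. }
  exists B, (vscale (-1) (B c)); split; [exact HB|]; split.
  - intro t. rewrite EB, Hc, (vsub_motion A b HA), (lor_inv_l A HA).
    unfold on_x_axis, flip_z, vsub, vadd, vscale, e1; simpl; split; ring.
  - intros p Sp. destruct (HS p Sp) as [Hd Hz]. rewrite EB; split; [|exact Hz].
    destruct (flip_z_lorentz s Hs) as (_ & _ & HL).
    destruct (lorentz_linear_inv A HA) as (_ & _ & HL').
    rewrite HL, HL'; exact Hd.
Qed.

Theorem proposition2p3
  (alpha : R) (a : vec3) (S : vec3 -> Prop) (N : vec3 -> vec3)
  (A : vec3 -> vec3) (b : vec3) :
  alpha <> 0 ->
  timelike a ->
  spacelike_surface S ->
  connected S ->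
  unit_normal_field S N ->
  (* the axis L is the image of the x-axis under the rigid motion (A,b);
     S is invariant under all rotations about L *)
  rigid_motion A b ->
  (forall theta q, S (motion A b q) -> S (motion A b (rotx theta q))) ->
  (forall p, S p -> lor p a <> 0) ->
  (forall U X, is_chart S U X -> forall u v, U u v ->
     mean_curv X N u v = alpha * lor (N (X u v)) a / lor (X u v) a) ->
  lor a (A e1) = 0 \/
  exists (r : R) (B : vec3 -> vec3) (c : vec3),
    0 < r /\ rigid_motion B c /\
    (forall t, on_x_axis (motion B c (motion A b (vscale t e1)))) /\
    (forall p, S p -> in_H2 r (motion B c p)).
Proof.
  intros Halpha Ha Hsurf Hconn HN HA Hinv Hden HH.
  destruct (Req_dec (lor a (A e1)) 0) as [Horth|Hobl]; [left; exact Horth|right].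
  destruct (concurrent_normals_hyperboloid S N (axis_center A b a) (lor_inv A)
              Hsurf Hconn HN (lorentz_linear_inv A HA)) as (r & s & Hr & Hs & HS).
  { intros p Sp.
    exact (normal_through_axis_center A b HA S N alpha a Hinv Ha Halpha Hsurf HN Hden HH
             p Sp Hobl). }
  destruct (axis_frame_H2 S A b (axis_center A b a) _ r s HA Hs eq_refl HS)
    as (B & c & HB & Haxis & HH2).
  exists r, B, c; auto.
Qed.
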